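(* Let $K_2\le 61440$ be the universal constant of the following statement: for all independent real random variables $X_1,\dots,X_n$ with finite second moments, $E=\mathbb{E}\sum_i X_i$, $V=\operatorname{Var}\sum_i X_i$, $V+E^2>0$, there is $k$ with $\operatorname{Var}|\sum_i X_i| \ge V\operatorname{Var}(\sum_{i\ne k}X_i)/(K_2(V+E^2))$. Let $f\colon\{\pm1\}^m\to\{\pm1\}$, let $I_1,\dots,I_n$ be a partition of $[m]=\{1,\dots,m\}$, and for each $j$ let $f_j = \sum_{\emptyset\neq S\subseteq I_j}\hat f(S)\chi_S$. Let $\epsilon\ge 0$ and suppose \[ \sum_{S\colon \exists j,\ S\subseteq I_j} \hat f(S)^2 \;\ge\; 1-\epsilon\cdot\operatorname{Var} f. \] Then there exists $k\in[n]$ such that \[ \big\| f - f_k - \hat f(\emptyset)\big\|_2^2 \;\le\; (K_2+2)\,\epsilon . \]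
   Context: $\{\pm1\}^m$ carries the uniform probability measure. For $S\subseteq[m]$, $\chi_S(x)=\prod_{i\in S}x_i$ (with $\chi_\emptyset=1$), and $\hat f(S)=\mathbb{E}[f\chi_S]$ is the Fourier coefficient, so $f=\sum_S \hat f(S)\chi_S$. $\|g\|_2^2=\mathbb{E}[g^2]$ and $\operatorname{Var} f=\mathbb{E}[f^2]-(\mathbb{E}f)^2=\sum_{S\ne\emptyset}\hat f(S)^2$. The sum in the hypothesis includes $S=\emptyset$. *)

From HB Require Import structures.
From mathcomp Require Import all_boot all_order all_algebra.
Set Implicit Arguments. Unset Strict Implicit. Unset Printing Implicit Defensive.
Import Order.TTheory GRing.Theory Num.Theory.
Local Open Scope ring_scope.

(* n independent real random variables X_0..X_{n-1}: X_i takes value x i t with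
   probability p i t, t ranging over a finite type T. *)
Section RV.
Variables (R : realFieldType) (n : nat) (T : finType).
Variables (p x : 'I_n -> T -> R).

Definition is_prob_family : Prop :=
  (forall i t, 0 <= p i t) /\ (forall i, \sum_(t : T) p i t = 1).

Definition jointPr (w : {ffun 'I_n -> T}) : R := \prod_(i < n) p i (w i).

Definition rvE (g : {ffun 'I_n -> T} -> R) : R :=
  \sum_(w : {ffun 'I_n -> T}) jointPr w * g w.

Definition rvVar (g : {ffun 'I_n -> T} -> R) : R :=
  rvE (fun w => g w ^+ 2) - (rvE g) ^+ 2.

Definition rvSum (w : {ffun 'I_n -> T}) : R := \sum_(i < n) x i (w i).
Definition rvSumExcept (k : 'I_n) (w : {ffun 'I_n -> T}) : R :=
  \sum_(i < n | i != k) x i (w i).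
End RV.

Definition K2_property (R : realFieldType) (K2 : R) : Prop :=
  forall (n : nat) (T : finType) (p x : 'I_n -> T -> R),
    is_prob_family p ->
    let E := rvE p (rvSum x) in
    let V := rvVar p (rvSum x) in
    0 < V + E ^+ 2 ->
    exists k : 'I_n,
      V * rvVar p (rvSumExcept x k) / (K2 * (V + E ^+ 2))
        <= rvVar p (fun w => `|rvSum x w|).

(* The cube {±1}^m is encoded as {ffun 'I_m -> bool}; coordinate i of a point
   w is sgnb (w i) (false ↦ 1, true ↦ -1).  Coordinates are 0-based. *)
Definition cube (m : nat) := {ffun 'I_m -> bool}.

Definition sgnb (R : realFieldType) (b : bool) : R := if b then -1 else 1.

Definition cubeE (R : realFieldType) (m : nat) (g : cube m -> R) : R :=
  (\sum_(w : cube m) g w) / (2 ^+ m).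

Definition cubeVar (R : realFieldType) (m : nat) (g : cube m -> R) : R :=
  cubeE (fun w => g w ^+ 2) - (cubeE g) ^+ 2.

Definition chi (R : realFieldType) (m : nat) (S : {set 'I_m}) (w : cube m) : R :=
  \prod_(i in S) sgnb R (w i).

Definition fhat (R : realFieldType) (m : nat) (f : cube m -> R) (S : {set 'I_m}) : R :=
  cubeE (fun w => f w * chi R S w).

Definition fpart (R : realFieldType) (m : nat) (f : cube m -> R) (I : {set 'I_m})
  (w : cube m) : R :=
  \sum_(S : {set 'I_m} | (S != set0) && (S \subset I)) fhat f S * chi R S w.

Definition is_partition (m n : nat) (I : 'I_n -> {set 'I_m}) : Prop :=
  (forall j, I j != set0) /\
  (forall j k, j != k -> [disjoint I j & I k]) /\
  (\bigcup_(j < n) I j = [set: 'I_m]).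

From HB Require Import structures.
From mathcomp Require Import all_boot all_order all_algebra ring lra.
Import Order.TTheory GRing.Theory Num.Theory.
Local Open Scope ring_scope.
Set Implicit Arguments. Unset Strict Implicit.

(* Write c = fhat f set0, s for the Fourier weight of f on sets inside a single
   block and s_k for its weight on subsets of I_k, so that the left-hand side
   of the theorem is 1 - s_k by Parseval.  Take n independent uniform copies
   of the cube and let the k-th variable be f_k on the k-th copy plus c/n.
   Gluing the copies along the partition is measure preserving, hence the sum
   has mean c and variance s - c^2, omitting the k-th variable leaves variance
   s - s_k, and because f = ±1, Var |sum| <= ||f - sum||^2 = 1 - s.  The K2
   inequality then gives (s - c^2) (s - s_k) <= K2 s (1 - s), which together
   with 1 - s <= eps (1 - c^2) yields 1 - s_k <= (K2 + 2) eps. *)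

Lemma sqr_dist_norm_le (R : realDomainType) (y z : R) :
  (`|y| - `|z|) ^+ 2 <= (y - z) ^+ 2.
Proof.
rewrite -[X in X <= _]real_normK ?num_real // -[X in _ <= X]real_normK ?num_real //.
by rewrite lerXn2r ?nnegrE ?normr_ge0 ?ler_dist_dist.
Qed.

Section CubeExpectation.
Variables (R : realFieldType) (m : nat).
Implicit Types (g h : cube m -> R) (a : R).

Lemma card_cube : #|{: cube m}| = (2 ^ m)%N.
Proof. by rewrite card_ffun card_bool card_ord. Qed.

Lemma sum_cube_const a : \sum_(w : cube m) a = a * 2 ^+ m.
Proof. by rewrite sumr_const card_cube -[LHS]mulr_natr natrX. Qed.

Lemma two_exp_neq0 : 2 ^+ m != 0 :> R.
Proof. by rewrite expf_neq0 // pnatr_eq0. Qed.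

Lemma cubeE_const a : cubeE (fun _ : cube m => a) = a.
Proof. by rewrite /cubeE sum_cube_const mulfK // two_exp_neq0. Qed.

Lemma eq_cubeE g h : g =1 h -> cubeE g = cubeE h.
Proof. by move=> gh; rewrite /cubeE; under eq_bigr do rewrite gh. Qed.

Lemma cubeED g h : cubeE (fun w => g w + h w) = cubeE g + cubeE h.
Proof. by rewrite /cubeE big_split /= mulrDl. Qed.

Lemma cubeEZ a g : cubeE (fun w => a * g w) = a * cubeE g.
Proof. by rewrite /cubeE -mulr_sumr mulrA. Qed.

Lemma cubeE_sum (I : Type) (r : seq I) (P : pred I) (F : I -> cube m -> R) :
  cubeE (fun w => \sum_(i <- r | P i) F i w) = \sum_(i <- r | P i) cubeE (F i).
Proof. by rewrite /cubeE exchange_big /= mulr_suml. Qed.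

Lemma ler_cubeE g h : (forall w, g w <= h w) -> cubeE g <= cubeE h.
Proof.
move=> gh; rewrite /cubeE ler_wpM2r ?ler_sum //.
by rewrite invr_ge0 exprn_ge0 ?ler0n.
Qed.

Lemma cubeE_ge0 g : (forall w, 0 <= g w) -> 0 <= cubeE g.
Proof. by move=> g_ge0; rewrite -(cubeE_const 0); apply: ler_cubeE. Qed.

Lemma cubeE_sqr_sub g a :
  cubeE (fun w => (g w - a) ^+ 2) = cubeVar g + (cubeE g - a) ^+ 2.
Proof.
rewrite /cubeVar (eq_cubeE (h := fun w => g w ^+ 2 + (-2 * a * g w + a ^+ 2))).
  by rewrite !cubeED cubeEZ cubeE_const; ring.
by move=> w; ring.
Qed.

Lemma cubeVar_le_sqr_sub g a : cubeVar g <= cubeE (fun w => (g w - a) ^+ 2).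
Proof. by rewrite cubeE_sqr_sub lerDl sqr_ge0. Qed.

Lemma cubeVarD_const g a : cubeVar (fun w => g w + a) = cubeVar g.
Proof.
rewrite /cubeVar (eq_cubeE (h := fun w => g w ^+ 2 + (2 * a * g w + a ^+ 2))).
  by rewrite !cubeED cubeEZ !cubeE_const; ring.
by move=> w; ring.
Qed.

End CubeExpectation.

Section Characters.
Variables (R : realFieldType) (m : nat).

Definition flip (a : 'I_m) (w : cube m) : cube m :=
  [ffun b => if b == a then ~~ w b else w b].

Lemma flipK a : involutive (flip a).
Proof.
move=> w; apply/ffunP => b; rewrite !ffunE.
by case: eqP => // ->; rewrite negbK.
Qed.

Lemma sgnbN (b : bool) : sgnb R (~~ b) = - sgnb R b.
Proof. by case: b; rewrite /sgnb ?opprK. Qed.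

Lemma sgnb_sqr (b : bool) : sgnb R b * sgnb R b = 1.
Proof. by case: b; rewrite /sgnb ?mulrNN mulr1. Qed.

Lemma chi_set0 (w : cube m) : chi R set0 w = 1.
Proof. by rewrite /chi big_set0. Qed.

Lemma chi_flip (S : {set 'I_m}) a w :
  chi R S (flip a w) = (if a \in S then -1 else 1) * chi R S w.
Proof.
rewrite /chi; case: (boolP (a \in S)) => Sa; last first.
  rewrite mul1r; apply: eq_bigr => i Si; rewrite ffunE.
  by case: eqP => // ia; rewrite -ia Si in Sa.
rewrite (bigD1 a Sa) [in RHS](bigD1 a Sa) /= ffunE eqxx sgnbN mulN1r mulNr.
congr (- (_ * _)); apply: eq_bigr => i /andP[_ ia].
by rewrite ffunE (negbTE ia).
Qed.

(* Characters of different sets are separated by some coordinate a; flipping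
   a is a measure-preserving involution that negates their product. *)
Lemma cubeE_chiM (S T : {set 'I_m}) :
  cubeE (fun w => chi R S w * chi R T w) = (S == T)%:R.
Proof.
have [<-|neqST] := eqVneq S T.
  rewrite -(cubeE_const m (1 : R)); apply: eq_cubeE => w.
  by rewrite /chi -big_split /=; apply: big1 => i _; rewrite sgnb_sqr.
have [a STa] : exists a, (a \in S) != (a \in T).
  apply/existsP; apply: contraNT neqST => /existsPn ST; apply/eqP/setP => a.
  by have := ST a; rewrite negbK => /eqP.
suff sum0 : \sum_(w : cube m) chi R S w * chi R T w = 0 by rewrite /cubeE sum0 mul0r.
apply/eqP; rewrite -[_ == 0](@mulrn_eq0 R _ 2) mulr2n.
rewrite {1}(reindex_inj (inv_inj (flipK a))) /= -big_split /=.
apply/eqP/big1 => w _; rewrite !chi_flip.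
by move: STa; case: (a \in S); case: (a \in T) => //= _; ring.
Qed.

Lemma cubeE_chi (S : {set 'I_m}) : cubeE (chi R S) = (S == set0)%:R.
Proof. by rewrite -cubeE_chiM; apply: eq_cubeE => w; rewrite chi_set0 mulr1. Qed.

End Characters.

Section FourierSeries.
Variables (R : realFieldType) (m : nat).
Implicit Types (al be : {set 'I_m} -> R) (Q P : pred {set 'I_m}).

Definition fourier_series al (w : cube m) : R := \sum_S al S * chi R S w.

Lemma cubeE_fourier_seriesM al be :
  cubeE (fun w => fourier_series al w * fourier_series be w) = \sum_S al S * be S.
Proof.
rewrite (eq_cubeE (h := fun w => \sum_S \sum_T
   (al S * be T) * (chi R S w * chi R T w))) => [|w]; last first.
  rewrite /fourier_series mulr_suml; apply: eq_bigr => S _.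
  by rewrite mulr_sumr; apply: eq_bigr => T _; ring.
rewrite cubeE_sum; apply: eq_bigr => S _.
rewrite cubeE_sum (bigD1 S) //= cubeEZ cubeE_chiM eqxx mulr1 big1 ?addr0 //.
by move=> T TS; rewrite cubeEZ cubeE_chiM eq_sym (negbTE TS) mulr0.
Qed.

Lemma cubeE_fourier_series al : cubeE (fourier_series al) = al set0.
Proof.
rewrite cubeE_sum (bigD1 set0) //= cubeEZ cubeE_chi eqxx mulr1 big1 ?addr0 //.
by move=> T T0; rewrite cubeEZ cubeE_chi (negbTE T0) mulr0.
Qed.

Lemma cubeE_mul_fourier_series (g : cube m -> R) be :
  cubeE (fun w => g w * fourier_series be w) = \sum_S fhat g S * be S.
Proof.
rewrite (eq_cubeE (h := fun w => \sum_S be S * (g w * chi R S w))) => [|w].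
  by rewrite cubeE_sum; apply: eq_bigr => S _; rewrite cubeEZ mulrC.
by rewrite /fourier_series mulr_sumr; apply: eq_bigr => S _; ring.
Qed.

Variable f : cube m -> R.

Definition fourier_trunc Q := fourier_series (fun S => if Q S then fhat f S else 0).

Definition fourier_weight Q := \sum_(S | Q S) fhat f S ^+ 2.

Lemma fhat_set0 : fhat f set0 = cubeE f.
Proof. by apply: eq_cubeE => w; rewrite chi_set0 mulr1. Qed.

Lemma cubeE_fourier_truncM Q P :
  cubeE (fun w => fourier_trunc Q w * fourier_trunc P w) = fourier_weight (predI Q P).
Proof.
rewrite cubeE_fourier_seriesM /fourier_weight [RHS]big_mkcond /=.
by apply: eq_bigr => S _; case: (Q S); case: (P S); rewrite ?mul0r ?mulr0 ?expr2.
Qed.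

Lemma cubeE_fourier_trunc_sqr Q : cubeE (fun w => fourier_trunc Q w ^+ 2) = fourier_weight Q.
Proof.
rewrite (eq_cubeE (h := fun w => fourier_trunc Q w * fourier_trunc Q w)) => [|w].
  by rewrite cubeE_fourier_truncM; apply: eq_bigl => S; rewrite /= andbb.
by rewrite expr2.
Qed.

Lemma cubeE_fourier_trunc Q : cubeE (fourier_trunc Q) = if Q set0 then cubeE f else 0.
Proof. by rewrite cubeE_fourier_series fhat_set0. Qed.

Lemma cubeE_sqr_sub_fourier_trunc Q :
  cubeE (fun w => (f w - fourier_trunc Q w) ^+ 2)
  = cubeE (fun w => f w ^+ 2) - fourier_weight Q.
Proof.
rewrite (eq_cubeE (h := fun w => f w ^+ 2 + (-2 * (f w * fourier_trunc Q w)
   + fourier_trunc Q w ^+ 2))) => [|w]; last by ring.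
rewrite !cubeED cubeEZ cubeE_mul_fourier_series cubeE_fourier_trunc_sqr.
suff -> : \sum_S fhat f S * (if Q S then fhat f S else 0) = fourier_weight Q by ring.
rewrite /fourier_weight [RHS]big_mkcond /=.
by apply: eq_bigr => S _; case: (Q S); rewrite ?mulr0 ?expr2.
Qed.

Lemma cubeVar_fourier_trunc Q :
  cubeVar (fourier_trunc Q) = fourier_weight Q - (if Q set0 then cubeE f else 0) ^+ 2.
Proof. by rewrite /cubeVar cubeE_fourier_trunc_sqr cubeE_fourier_trunc. Qed.

Lemma fourier_truncB Q P w : subpred P Q ->
  fourier_trunc Q w - fourier_trunc P w = fourier_trunc (predD Q P) w.
Proof.
move=> PQ; rewrite /fourier_trunc /fourier_series -sumrB; apply: eq_bigr => S _ /=.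
by case PS: (P S); rewrite /= ?mul0r ?subr0 // (PQ S PS) subrr.
Qed.

Lemma fourier_weightB Q P : subpred P Q ->
  fourier_weight (predD Q P) = fourier_weight Q - fourier_weight P.
Proof.
move=> PQ; rewrite /fourier_weight [X in _ = X - _](bigID P) /=.
rewrite [X in _ = X + _ - _](eq_bigl P) => [|S]; last exact/andb_idl/PQ.
by rewrite [RHS]addrC addKr; apply: eq_bigl => S; rewrite /= andbC.
Qed.

Lemma fourier_weight_le Q P : subpred Q P -> fourier_weight Q <= fourier_weight P.
Proof.
move=> QP; rewrite /fourier_weight [X in _ <= X](bigID Q) /=.
rewrite [X in _ <= X + _](eq_bigl Q) => [|S]; last exact/andb_idl/QP.
by rewrite lerDl sumr_ge0 // => S _; rewrite sqr_ge0.
Qed.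

Lemma fourier_weight_set0 Q : Q set0 -> fhat f set0 ^+ 2 <= fourier_weight Q.
Proof.
have -> : fhat f set0 ^+ 2 = fourier_weight (pred1 set0).
  by rewrite /fourier_weight big_pred1_eq.
by move=> Q0; apply: fourier_weight_le => S /eqP ->.
Qed.

Lemma fourier_trunc_subset (J : {set 'I_m}) w :
  fourier_trunc (fun S => S \subset J) w = fpart f J w + fhat f set0.
Proof.
rewrite /fourier_trunc /fourier_series (bigD1 set0) //= sub0set chi_set0 mulr1 addrC.
congr (_ + _); rewrite /fpart big_mkcondr /=; apply: eq_bigr => S _.
by case: ifP => // _; rewrite mul0r.
Qed.

End FourierSeries.

Section SignFunction.
Variables (R : realFieldType) (m : nat) (f : cube m -> R).
Hypothesis f_pm1 : forall w, f w = 1 \/ f w = -1.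

Lemma norm_pm1 w : `|f w| = 1.
Proof. by case: (f_pm1 w) => ->; rewrite ?normrN normr1. Qed.

Lemma cubeE_sqr_pm1 : cubeE (fun w => f w ^+ 2) = 1.
Proof.
rewrite -(cubeE_const m 1); apply: eq_cubeE => w.
by rewrite -real_normK ?num_real // norm_pm1 expr1n.
Qed.

Lemma cubeVar_pm1 : cubeVar f = 1 - fhat f set0 ^+ 2.
Proof. by rewrite /cubeVar cubeE_sqr_pm1 fhat_set0. Qed.

Lemma cubeE_sqr_sub_fourier_trunc_pm1 Q :
  cubeE (fun w => (f w - fourier_trunc f Q w) ^+ 2) = 1 - fourier_weight f Q.
Proof. by rewrite cubeE_sqr_sub_fourier_trunc cubeE_sqr_pm1. Qed.

Lemma fourier_weight_le1 Q : fourier_weight f Q <= 1.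
Proof.
rewrite -subr_ge0 -cubeE_sqr_sub_fourier_trunc_pm1.
by apply: cubeE_ge0 => w; apply: sqr_ge0.
Qed.

(* Centring |g| at the constant 1 = |f| can only increase the second moment,
   and ||g| - |f|| <= |g - f|. *)
Lemma cubeVar_norm_le_sqr_sub (g : cube m -> R) :
  cubeVar (fun w => `|g w|) <= cubeE (fun w => (f w - g w) ^+ 2).
Proof.
apply: le_trans (cubeVar_le_sqr_sub _ 1) _; apply: ler_cubeE => w.
by rewrite -(norm_pm1 w) -[X in X <= _]sqrrN opprB sqr_dist_norm_le.
Qed.

End SignFunction.

Section Gluing.
Variables (R : realFieldType) (m n : nat) (I : 'I_n -> {set 'I_m}).
Hypothesis HI : is_partition I.

Definition block_local : pred {set 'I_m} := fun S => [exists j, S \subset I j].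

Lemma block_local_subset k : subpred (fun S : {set 'I_m} => S \subset I k) block_local.
Proof. by move=> S SIk; apply/existsP; exists k. Qed.

Definition glue (w : {ffun 'I_n -> cube m}) : cube m :=
  [ffun a => if [pick j | a \in I j] is Some j then w j a else false].

Lemma partition_cover a : exists j, a \in I j.
Proof.
have : a \in [set: 'I_m] by rewrite inE.
by case: HI => _ [_ <-] /bigcupP [j _ Ija]; exists j.
Qed.

Lemma glue_block i a w : a \in I i -> glue w a = w i a.
Proof.
move=> Iia; rewrite ffunE; case: pickP => [j Ija|noj]; last by rewrite noj in Iia.
have [-> //|ji] := eqVneq j i.
by case: HI => _ [disjI _]; rewrite (disjointFr (disjI _ _ ji) Ija) in Iia.
Qed.

Definition cube_xor (u v : cube m) : cube m := [ffun a => u a (+) v a].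

Definition blocks_xor (u : cube m) (w : {ffun 'I_n -> cube m}) : {ffun 'I_n -> cube m} :=
  [ffun i => cube_xor (w i) u].

Lemma cube_xorK u : involutive (cube_xor u).
Proof. by move=> v; apply/ffunP => a; rewrite !ffunE addKb. Qed.

Lemma blocks_xorK u : involutive (blocks_xor u).
Proof. by move=> w; apply/ffunP => i; apply/ffunP => a; rewrite !ffunE addbK. Qed.

Lemma glue_xor u w : glue (blocks_xor u w) = cube_xor (glue w) u.
Proof.
apply/ffunP => a; rewrite !ffunE; case: pickP => [j _|noj]; first by rewrite !ffunE.
by have [j Ija] := partition_cover a; rewrite noj in Ija.
Qed.

Definition cube_uniform (_ : 'I_n) (_ : cube m) : R := (2 ^+ m)^-1.

Lemma cube_uniform_prob : is_prob_family cube_uniform.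
Proof.
split=> [i t|i]; first by rewrite invr_ge0 exprn_ge0 ?ler0n.
by rewrite sum_cube_const mulVf ?two_exp_neq0.
Qed.

(* Averaging over the translates [blocks_xor u] shows that all fibres of
   [glue] have the same size. *)
Lemma sum_glue (F : cube m -> R) :
  (\sum_w F (glue w)) * 2 ^+ m = (2 ^+ m) ^+ n * \sum_v F v.
Proof.
rewrite -sum_cube_const.
transitivity (\sum_(u : cube m) \sum_w F (cube_xor (glue w) u)).
  apply: eq_bigr => u _; rewrite (reindex_inj (inv_inj (blocks_xorK u))) /=.
  by apply: eq_bigr => w _; rewrite glue_xor.
rewrite exchange_big /= (eq_bigr (fun _ => \sum_v F v)) => [|w _]; last first.
  by rewrite [in RHS](reindex_inj (inv_inj (cube_xorK (glue w)))).
by rewrite sumr_const card_ffun card_cube card_ord -[LHS]mulr_natl !natrX.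
Qed.

Lemma rvE_glue (g : {ffun 'I_n -> cube m} -> R) (F : cube m -> R) :
  (forall w, g w = F (glue w)) -> rvE cube_uniform g = cubeE F.
Proof.
move=> gF; rewrite /rvE /jointPr /cube_uniform.
under eq_bigr => w _ do rewrite prodr_const card_ord gF.
rewrite -mulr_sumr -[\sum_w _](mulfK (two_exp_neq0 R m)) sum_glue.
by rewrite /cubeE exprVn !mulrA mulVf ?mul1r // expf_neq0 // two_exp_neq0.
Qed.

Lemma rvVar_glue (g : {ffun 'I_n -> cube m} -> R) (F : cube m -> R) :
  (forall w, g w = F (glue w)) -> rvVar cube_uniform g = cubeVar F.
Proof.
move=> gF; rewrite /rvVar /cubeVar (rvE_glue gF).
by rewrite (@rvE_glue _ (fun v => F v ^+ 2)) // => w; rewrite gF.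
Qed.

Variable f : cube m -> R.

Lemma fpart_glue i (w : {ffun 'I_n -> cube m}) : fpart f (I i) (w i) = fpart f (I i) (glue w).
Proof.
apply: eq_bigr => S /andP[_ SIi]; congr (_ * _); apply: eq_bigr => a Sa.
by rewrite (glue_block (i := i)) // (subsetP SIi).
Qed.

(* A nonempty set lies inside at most one block, so the block parts add up to
   the truncation of f to block-local characters. *)
Lemma sum_fpart (j0 : 'I_n) v :
  \sum_i fpart f (I i) v + fhat f set0 = fourier_trunc f block_local v.
Proof.
rewrite /fpart; under eq_bigr => i _ do rewrite big_mkcond /=.
rewrite exchange_big /= (bigD1 set0) //= big1 => [|i _]; last by rewrite eqxx.
rewrite /fourier_trunc /fourier_series /block_local [RHS](bigD1 set0) //=.
have -> : [exists j, set0 \subset I j] by apply/existsP; exists j0; apply: sub0set.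
rewrite chi_set0 mulr1 add0r addrC; congr (_ + _); apply: eq_bigr => S S0.
case: existsP => [[j SIj]|noj]; last first.
  by rewrite mul0r big1 // => i _; rewrite S0; case: ifP => // SIi; case: noj; exists i.
rewrite (bigD1 j) //= S0 SIj big1 ?addr0 // => i ij; case: ifP => //= SIi.
have : S \subset I i :&: I j by rewrite subsetI SIi.
case: HI => _ [disjI _]; rewrite (disjoint_setI0 (disjI _ _ ij)) subset0.
by move/eqP => S_0; rewrite S_0 eqxx in S0.
Qed.

End Gluing.

(* From (s - c2) (s - u) <= K2 (1 - s) <= K2 eps (1 - c2) and
   s - c2 >= (1 - eps) (1 - c2) one gets (1 - eps) (s - u) <= K2 eps. *)
Lemma weight_deficit_le (R : realFieldType) (K2 eps c2 s u : R) :
  0 < K2 -> 0 <= eps -> 0 <= c2 <= u -> u <= s <= 1 -> 1 - eps * (1 - c2) <= s ->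
  (0 < s -> (s - c2) * (s - u) / (K2 * s) <= 1 - s) -> 1 - u <= (K2 + 2) * eps.
Proof.
move=> K2_gt0 eps_ge0 /andP[c2_ge0 c2u] /andP[us s_le1] Hs HK.
have eps_c2 : eps * (1 - c2) <= eps by nra.
have [s_le0|s_gt0] := lerP s 0; first by nra.
move: (HK s_gt0); rewrite ler_pdivrMr ?mulr_gt0 // => {}HK.
have [c2_1|c2_lt1] := eqVneq c2 1.
  have -> : u = 1 by lra.
  by rewrite subrr mulr_ge0 // addr_ge0 // ltW.
have {}c2_lt1 : 0 < 1 - c2 by rewrite subr_gt0 lt_neqAle c2_lt1; lra.
have lower : (1 - c2) * (1 - eps) * (s - u) <= (s - c2) * (s - u).
  have : 0 <= (s - u) * (s - 1 + eps * (1 - c2)) by rewrite mulr_ge0 ?subr_ge0 //; lra.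
  nra.
have upper : (1 - s) * (K2 * s) <= (1 - c2) * (K2 * eps).
  have : 0 <= (1 - s) * K2 * (1 - s) by rewrite !mulr_ge0 ?subr_ge0 // ltW.
  have : 0 <= K2 * (eps * (1 - c2) - (1 - s)).
    by rewrite mulr_ge0 ?(ltW K2_gt0) // subr_ge0; lra.
  nra.
have : (1 - c2) * ((1 - eps) * (s - u)) <= (1 - c2) * (K2 * eps) by lra.
rewrite ler_pM2l // => key.
nra.
Qed.

Lemma cubeVar_cube0 (R : realFieldType) (g : cube 0 -> R) : cubeVar g = 0.
Proof.
have cubeE0 (h : cube 0 -> R) : cubeE h = h [ffun => false].
  rewrite -(cubeE_const 0 (h _)); apply: eq_cubeE => w.
  by congr h; apply/ffunP => -[].
by rewrite /cubeVar !cubeE0 subrr.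
Qed.

Section BlockModel.
Variables (R : realFieldType) (m n : nat) (f : cube m -> R).
Hypothesis f_pm1 : forall w, f w = 1 \/ f w = -1.
Variable I : 'I_n.+1 -> {set 'I_m}.
Hypothesis HI : is_partition I.

(* The k-th independent variable is the part of f living on block k, shifted
   by an equal share of the mean so that the sum approximates f itself. *)
Definition block_part (k : 'I_n.+1) (t : cube m) : R :=
  fpart f (I k) t + fhat f set0 / n.+1%:R.

Lemma rvSum_block_part w : rvSum block_part w = fourier_trunc f (block_local I) (glue I w).
Proof.
rewrite /rvSum /block_part big_split /= sumr_const card_ord -(sum_fpart HI f ord0).
congr (_ + _); first by apply: eq_bigr => i _; apply: fpart_glue.
by rewrite -[LHS]mulr_natr divfK // pnatr_eq0.
Qed.

Lemma rvSumExcept_block_part k w :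
  rvSumExcept block_part k w
  = fourier_trunc f (predD (block_local I) (fun S : {set 'I_m} => S \subset I k)) (glue I w)
    + \sum_(i < n.+1 | i != k) fhat f set0 / n.+1%:R.
Proof.
rewrite -fourier_truncB; last exact: block_local_subset.
rewrite (fourier_trunc_subset f (I k)).
rewrite -(sum_fpart HI f ord0) (bigD1 k) //= /rvSumExcept /block_part big_split /=.
under eq_bigr => i _ do rewrite (fpart_glue HI).
by ring.
Qed.

Lemma block_local_set0 : block_local I set0.
Proof. by apply/existsP; exists ord0; apply: sub0set. Qed.

Lemma rvE_block_sum : rvE (@cube_uniform R m n.+1) (rvSum block_part) = fhat f set0.
Proof.
by rewrite (rvE_glue HI rvSum_block_part) cubeE_fourier_trunc block_local_set0 fhat_set0.
Qed.

Lemma rvVar_block_sum :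
  rvVar (@cube_uniform R m n.+1) (rvSum block_part)
  = fourier_weight f (block_local I) - fhat f set0 ^+ 2.
Proof.
by rewrite (rvVar_glue HI rvSum_block_part) cubeVar_fourier_trunc block_local_set0 fhat_set0.
Qed.

Lemma rvVar_block_sum_except k :
  rvVar (@cube_uniform R m n.+1) (rvSumExcept block_part k)
  = fourier_weight f (block_local I) - fourier_weight f (fun S : {set 'I_m} => S \subset I k).
Proof.
pose d := \sum_(i < n.+1 | i != k) fhat f set0 / n.+1%:R.
pose F v :=
  fourier_trunc f (predD (block_local I) (fun S : {set 'I_m} => S \subset I k)) v + d.
rewrite (rvVar_glue HI (F := F) (rvSumExcept_block_part k)) cubeVarD_const.
rewrite cubeVar_fourier_trunc /= sub0set expr0n subr0 fourier_weightB //.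
exact: block_local_subset.
Qed.

Lemma rvVar_norm_block_sum :
  rvVar (@cube_uniform R m n.+1) (fun w => `|rvSum block_part w|)
  <= 1 - fourier_weight f (block_local I).
Proof.
rewrite (rvVar_glue HI (F := fun v => `|fourier_trunc f (block_local I) v|)).
  by rewrite -(cubeE_sqr_sub_fourier_trunc_pm1 f_pm1); apply: cubeVar_norm_le_sqr_sub.
by move=> w; rewrite rvSum_block_part.
Qed.

Lemma exists_block_K2_bound (K2 : R) : K2_property K2 ->
  exists k : 'I_n.+1, 0 < fourier_weight f (block_local I) ->
    (fourier_weight f (block_local I) - fhat f set0 ^+ 2)
    * (fourier_weight f (block_local I)
       - fourier_weight f (fun S : {set 'I_m} => S \subset I k))
    / (K2 * fourier_weight f (block_local I)) <= 1 - fourier_weight f (block_local I).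
Proof.
move=> HK2; have [s_gt0|s_le0] := ltrP 0 (fourier_weight f (block_local I)); last first.
  by exists ord0.
have /= [|k HK] := HK2 _ _ _ block_part (@cube_uniform_prob R m n.+1).
  by rewrite rvVar_block_sum rvE_block_sum subrK.
exists k => _; apply: le_trans rvVar_norm_block_sum.
by move: HK; rewrite rvVar_block_sum rvE_block_sum rvVar_block_sum_except subrK.
Qed.

End BlockModel.

Theorem corollary2 (R : realFieldType) (K2 : R)
  (K2_pos : 0 < K2) (HK2 : K2_property K2)
  (m n : nat) (f : cube m -> R)
  (f_pm1 : forall w, f w = 1 \/ f w = -1)
  (I : 'I_n -> {set 'I_m}) (HI : is_partition I)
  (eps : R) (eps_ge0 : 0 <= eps)
  (Hsum : \sum_(S : {set 'I_m} | [exists j, S \subset I j]) fhat f S ^+ 2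
            >= 1 - eps * cubeVar f) :
  exists k : 'I_n,
    cubeE (fun w => (f w - fpart f (I k) w - fhat f set0) ^+ 2) <= (K2 + 2) * eps.
Proof.
case: n I HI Hsum => [|n] I HI Hsum.
  (* without blocks the cube has dimension 0, so Var f = 0 and Hsum fails *)
  case: m f I HI Hsum {f_pm1} => [|m] f I HI Hsum; last first.
    by have [[]] := partition_cover HI ord0.
  move: Hsum; rewrite big_pred0 => [|S]; last by apply/existsP => -[[]].
  by rewrite cubeVar_cube0 mulr0 subr0 ler10.
have [k HK] := exists_block_K2_bound f_pm1 HI HK2.
exists k.
have -> : cubeE (fun w => (f w - fpart f (I k) w - fhat f set0) ^+ 2)
          = 1 - fourier_weight f (fun S : {set 'I_m} => S \subset I k).
  rewrite -(cubeE_sqr_sub_fourier_trunc_pm1 f_pm1); apply: eq_cubeE => w.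
  by rewrite fourier_trunc_subset opprD addrA.
apply: weight_deficit_le HK => //.
- by rewrite sqr_ge0 fourier_weight_set0 ?sub0set.
- by rewrite fourier_weight_le ?fourier_weight_le1 //; apply: block_local_subset.
- by rewrite -(cubeVar_pm1 f_pm1).
Qed.
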